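(* Let $k\ge 1$ and let $p_k(n)$ be the number of partitions of $n$ into exactly $k$ positive parts. Let $\{a_j\}_{j\ge 0}$ be the coefficients of the power series expansion of the rational function $$A_k(q)=\frac{(1-q^k)^k}{\prod_{m=1}^{k}(1-q^m)}=\sum_{j\ge 0}a_jq^j.$$ For integers $x$ and $j$ define $$\mathcal{B}_{k,j}(x)=\binom{\lfloor \frac{x-j}{k}\rfloor+k-1}{k-1}\cdot\delta_{(x-j)\equiv 0 \pmod k},$$ where $\delta_{(x-j)\equiv 0\pmod k}$ equals $1$ if $k\mid x-j$ and $0$ otherwise. Then for every integer $n\ge k$, $$p_k(n)=\sum_{j=0}^{n-k}a_j\,\mathcal{B}_{k,j}(n-k).$$
   Context: $\mathcal{B}_{k,j}$ is called the Simplicial Ehrhart Basis in the paper. *)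

From mathcomp Require Import all_boot all_order all_algebra.
Set Implicit Arguments. Unset Strict Implicit. Unset Printing Implicit Defensive.
Import Order.TTheory GRing.Theory Num.Theory.

Definition pk (k n : nat) : nat :=
  #|[set t : k.-tuple 'I_n.+1 |
      [&& sorted geq (map val t), all (fun i => 0 < i) (map val t)
        & sumn (map val t) == n]]|.

Local Open Scope ring_scope.

Definition Anum (k : nat) : {poly int} := (1 - 'X^k) ^+ k.
Definition Aden (k : nat) : {poly int} := \prod_(1 <= m < k.+1) (1 - 'X^m).

(* a : nat -> int is the coefficient sequence of the power series expansion of
   Anum k / Aden k, i.e. (sum_j a_j q^j) * Aden k = Anum k as formal power series. *)
Definition is_Ak_coeffs (k : nat) (a : nat -> int) : Prop :=
  forall j : nat, \sum_(0 <= i < j.+1) a i * (Aden k)`_(j - i) = (Anum k)`_j.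

Local Close Scope ring_scope.

(* Simplicial Ehrhart basis B_{k,j}(x), for x >= j (the only case used):
   binom(floor((x-j)/k) + k - 1, k - 1) if k | x - j, and 0 otherwise. *)
Definition Bkj (k j x : nat) : nat :=
  if (j <= x) && (k %| x - j) then 'C((x - j) %/ k + k - 1, k - 1) else 0.

From mathcomp Require Import all_boot all_order all_algebra ring.

(* Let C_k(q) = sum_x p_k(x + k) q^x.  Splitting the partitions of n + k + 1
   into k + 1 parts according to whether the smallest part is 1 (remove it) or
   not (subtract 1 from every part) gives
   p_{k+1}(n + k + 1) = p_k(n + k) + p_{k+1}(n), i.e.
   C_{k+1}(q) (1 - q^(k+1)) = C_k(q), so C_k = 1 / prod_(m <= k) (1 - q^m).
   By Pascal's rule, [k | x] binom(x/k + m, m) are the coefficients of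
   (1 - q^k)^-(m+1).  Hence C_k = A_k (1 - q^k)^-k, and comparing the
   coefficients of q^(n-k) gives the formula, as B_{k,j}(x) = B_{k,0}(x - j).
   Power series are represented by polynomials, and identities between them
   are checked modulo q^N, i.e. after applying take_poly N. *)

(* Parts are listed in increasing order, so that the smallest one is the head. *)
Definition ipartition (k n : nat) (s : seq nat) :=
  [&& size s == k, sorted leq s, all (fun i => 0 < i) s & sumn s == n].

Definition ipartitions k n : seq (seq nat) :=
  [seq rev (map val t) | t : k.-tuple 'I_n.+1 in
     [set t : k.-tuple 'I_n.+1 | ipartition k n (rev (map val t))]].

Lemma size_ipartitions k n : size (ipartitions k n) = pk k n.
Proof.
rewrite size_map -cardE; apply: eq_card => t; rewrite !inE /ipartition.
by rewrite size_rev size_map size_tuple eqxx rev_sorted all_rev sumn_rev.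
Qed.

Lemma ipartitions_uniq k n : uniq (ipartitions k n).
Proof.
rewrite map_inj_uniq ?enum_uniq // => t1 t2 /(can_inj revK)/(inj_map val_inj).
exact: val_inj.
Qed.

Lemma leq_sumn (s : seq nat) x : x \in s -> x <= sumn s.
Proof. by move=> xs; rewrite (perm_sumn (perm_to_rem xs)) leq_addr. Qed.

Lemma mem_ipartitions k n s : (s \in ipartitions k n) = ipartition k n s.
Proof.
apply/imageP/idP => [[t] | s_part]; first by rewrite inE => ? ->.
have sz : size (map (@inord n) (rev s)) == k.
  by case/and4P: s_part => /eqP sz _ _ _; rewrite size_map size_rev sz.
have s_le_n x : x \in rev s -> x <= n.
  by rewrite mem_rev => /leq_sumn; case/and4P: s_part => _ _ _ /eqP ->.
have valK : rev (map val (Tuple sz)) = s.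
  rewrite /= -map_comp map_id_in ?revK // => x /s_le_n /= x_le_n.
  by rewrite inordK.
by exists (Tuple sz); rewrite ?inE valK.
Qed.

Lemma pk_eq_size k n (l : seq (seq nat)) :
  uniq l -> (forall s, (s \in l) = ipartition k n s) -> pk k n = size l.
Proof.
move=> l_uniq l_part; rewrite -size_ipartitions; apply/perm_size/uniq_perm => //.
  exact: ipartitions_uniq.
by move=> s; rewrite mem_ipartitions l_part.
Qed.

Lemma size_le_sumn (s : seq nat) : all (fun i => 0 < i) s -> size s <= sumn s.
Proof. by elim: s => //= x s IHs /andP[x_gt0 /IHs]; rewrite -add1n; apply: leq_add. Qed.

Lemma pk0 n : pk 0 n = (n == 0).
Proof.
rewrite (@pk_eq_size 0 n (if n == 0 then [:: [::]] else [::])); first by case: eqP.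
  by case: eqP.
by case=> [|x s]; case: n.
Qed.

Lemma pk_small k n : n < k -> pk k n = 0.
Proof.
move=> n_lt_k; rewrite (@pk_eq_size k n [::]) // => s.
rewrite in_nil; apply/esym/negP => /and4P[/eqP size_s _ s_pos /eqP sum_s].
by move: (size_le_sumn _ s_pos); rewrite size_s sum_s leqNgt n_lt_k.
Qed.

Lemma ipartition_cons1 k n s : ipartition k.+1 n.+1 (1 :: s) = ipartition k n s.
Proof.
rewrite /ipartition /= !eqSS.
case: (boolP (all _ s)) => [s_pos | _]; first by rewrite path_min_sorted.
by rewrite !andFb !andbF.
Qed.

Lemma sumn_map_succn (s : seq nat) : sumn (map succn s) = sumn s + size s.
Proof. by elim: s => //= x s ->; rewrite addSn addnA addnS. Qed.

Lemma ipartition_map_succn k n s :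
  all (fun i => 0 < i) s -> ipartition k (n + k) (map succn s) = ipartition k n s.
Proof.
move=> s_pos; rewrite /ipartition size_map sorted_map s_pos.
have -> : all (fun i => 0 < i) (map succn s) by apply/allP => _ /mapP[? _ ->].
rewrite sumn_map_succn.
by case: eqP => //= ->; rewrite eqn_add2r.
Qed.

Lemma ipartition_split k n s : ipartition k.+1 (n + k.+1) s ->
  (exists2 t, s = 1 :: t & ipartition k (n + k) t) \/
  (exists2 t, s = map succn t & ipartition k.+1 n t).
Proof.
case: s => [|x s] s_part; first by case/and4P: s_part.
have [x1 | x_ne1] := eqVneq x 1.
  by left; exists s; rewrite ?x1 // -ipartition_cons1 -addnS -x1.
have all_ge2 : all (leq 2) (x :: s).
  have x_ge2 : 1 < x.
    by case/and4P: s_part => _ _ /andP[x_gt0 _] _; rewrite ltn_neqAle eq_sym x_ne1.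
  have : all (leq x) s by apply: order_path_min leq_trans _; case/and4P: s_part.
  by rewrite /= x_ge2 => /allP s_ge_x; apply/allP => i /s_ge_x; apply: leq_trans.
have succ_predK : map succn (map predn (x :: s)) = x :: s.
  by rewrite -map_comp map_id_in // => i /(allP all_ge2) /ltnW /prednK.
right; exists (map predn (x :: s)) => //.
rewrite -ipartition_map_succn ?succ_predK //.
by apply/allP => _ /mapP[i /(allP all_ge2) i_ge2 ->]; rewrite -ltnS prednK // ltnW.
Qed.

Lemma pk_rec k n : pk k.+1 (n + k.+1) = pk k (n + k) + pk k.+1 n.
Proof.
rewrite -[pk k _]size_ipartitions -[pk k.+1 n]size_ipartitions.
rewrite -(size_map (cons 1)) -(size_map (map succn) (ipartitions _ n)) -size_cat.
apply: pk_eq_size.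
- have cons1_inj : injective (cons 1) by move=> ? ? [].
  rewrite cat_uniq (map_inj_uniq cons1_inj) (map_inj_uniq (inj_map succn_inj)).
  rewrite !ipartitions_uniq andbT /=.
  apply/hasPn => _ /mapP[u u_part ->]; apply/mapP => -[t _].
  move: u_part; rewrite mem_ipartitions => /and4P[_ _ u_pos _].
  by case: u u_pos => [|x u] //= /andP[x_gt0 _] [x0]; rewrite x0 in x_gt0.
move=> s; rewrite mem_cat; apply/idP/idP.
  case/orP => /mapP[t]; rewrite mem_ipartitions => t_part ->.
    by rewrite addnS ipartition_cons1.
  by rewrite ipartition_map_succn //; case/and4P: t_part.
case/ipartition_split => -[t -> t_part]; apply/orP.
  by left; apply/map_f; rewrite mem_ipartitions.
by right; apply/map_f; rewrite mem_ipartitions.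
Qed.

Definition ehrhart k m i := if k %| i then 'C(i %/ k + m, m) else 0.

Lemma ehrhart0_rec k i : 0 < k ->
  ehrhart k 0 i = (i == 0) + (if i < k then 0 else ehrhart k 0 (i - k)).
Proof.
rewrite /ehrhart => k_gt0; case: ltnP => [i_lt_k | k_le_i].
  by case: i i_lt_k => [|i] i_lt_k; rewrite ?dvdn0 ?bin0 ?gtnNdvd.
by rewrite dvdn_subl // gtn_eqF ?(leq_trans k_gt0 k_le_i) // !bin0.
Qed.

Lemma ehrhartS_rec k m i : 0 < k ->
  ehrhart k m.+1 i = ehrhart k m i + (if i < k then 0 else ehrhart k m.+1 (i - k)).
Proof.
rewrite /ehrhart => k_gt0; case: ltnP => [i_lt_k | k_le_i].
  by case: i i_lt_k => [|i] i_lt_k; rewrite ?dvdn0 ?div0n ?binn ?gtnNdvd.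
rewrite dvdn_subl //; case: dvdnP => [[[|t] i_eq] | _] //; subst i.
  by rewrite mul0n leqn0 eqn0Ngt k_gt0 in k_le_i.
by rewrite mulnK // mulSn addKn mulnK // addSn binS [LHS]addnC addSnnS.
Qed.

Lemma Bkj_ehrhart k j x : 0 < k -> j <= x -> Bkj k j x = ehrhart k k.-1 (x - j).
Proof. by move=> k_gt0 le_jx; rewrite /Bkj /ehrhart le_jx -subn1 addnBA. Qed.

Import GRing.Theory.
Local Open Scope ring_scope.

Lemma take_polyMl (R : nzSemiRingType) N (p q : {poly R}) :
  take_poly N (take_poly N p * q) = take_poly N (p * q).
Proof.
apply/polyP => i; rewrite !coef_take_poly; case: ltnP => // iN.
rewrite !coefM; apply: eq_bigr => j _.
by rewrite coef_take_poly (leq_ltn_trans (leq_ord j) iN).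
Qed.

Lemma take_polyMr (R : nzSemiRingType) N (p q : {poly R}) :
  take_poly N (p * take_poly N q) = take_poly N (p * q).
Proof.
apply/polyP => i; rewrite !coef_take_poly; case: ltnP => // iN.
rewrite !coefM; apply: eq_bigr => j _.
by rewrite coef_take_poly (leq_ltn_trans (leq_subr j i) iN).
Qed.

Lemma take_poly_mul_1subXn (R : nzRingType) N k (f g : nat -> R) :
  (forall i, (i < N)%N -> f i = g i + (if (i < k)%N then 0 else f (i - k)%N)) ->
  take_poly N (\poly_(i < N) f i * (1 - 'X^k)) = \poly_(i < N) g i.
Proof.
move=> f_rec; apply/polyP => i.
rewrite coef_take_poly mulrBr mulr1 coefB coefMXn !coef_poly.
case: ltnP => // iN; rewrite f_rec //; case: ltnP => [_ | ki]; first by rewrite !subr0 addr0.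
by rewrite (leq_ltn_trans (leq_subr k i) iN) addrK.
Qed.

Lemma poly_delta0 N : (0 < N)%N -> \poly_(i < N) ((i == 0%N)%:Z) = 1.
Proof.
move=> N_gt0; apply/polyP => i; rewrite coef_poly coef1.
by case: ltnP => [_ | /(leq_trans N_gt0)/gtn_eqF ->]; first case: (i == 0%N).
Qed.

Definition pk_series k N : {poly int} := \poly_(i < N) (pk k (i + k))%:Z.

Lemma take_pk_series_Aden k N : (0 < N)%N -> take_poly N (pk_series k N * Aden k) = 1.
Proof.
move=> N_gt0; elim: k => [|k IHk].
  rewrite /Aden big_geq // mulr1 take_poly_id ?size_poly // -(poly_delta0 _ N_gt0).
  by apply: eq_poly => i _; rewrite addn0 pk0.
rewrite /Aden big_nat_recr //= -/(Aden k) mulrA mulrAC -take_polyMl.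
rewrite (@take_poly_mul_1subXn _ _ _ _ (fun i => (pk k (i + k))%:Z)) ?take_polyMl // => i _.
rewrite pk_rec PoszD; congr (_ + _).
by case: ltnP => [/pk_small -> | /subnK ->].
Qed.

Definition ehrhart_series k m N : {poly int} := \poly_(i < N) (ehrhart k m i)%:Z.

Lemma take_ehrhart_series k m N : (0 < k)%N -> (0 < N)%N ->
  take_poly N (ehrhart_series k m N * (1 - 'X^k) ^+ m.+1) = 1.
Proof.
move=> k_gt0 N_gt0; elim: m => [|m IHm].
  rewrite expr1 (@take_poly_mul_1subXn _ _ _ _ (fun i => (i == 0%N)%:Z)) ?poly_delta0 // => i _.
  by rewrite ehrhart0_rec // PoszD; case: ltnP.
rewrite exprS mulrA -take_polyMl.
rewrite (@take_poly_mul_1subXn _ _ _ _ (fun i => (ehrhart k m i)%:Z)) ?take_polyMl // => i _.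
by rewrite ehrhartS_rec // PoszD; case: ltnP.
Qed.

Lemma take_Ak_ehrhart k a N : (0 < k)%N -> (0 < N)%N -> is_Ak_coeffs k a ->
  take_poly N (\poly_(i < N) a i * ehrhart_series k k.-1 N) = pk_series k N.
Proof.
move=> k_gt0 N_gt0 a_coeffs.
set A := \poly_(i < N) a i; set E := ehrhart_series k k.-1 N; set C := pk_series k N.
have take_A_Aden : take_poly N (A * Aden k) = take_poly N (Anum k).
  apply/polyP => j; rewrite !coef_take_poly; case: ltnP => // jN.
  rewrite -a_coeffs coefM big_mkord; apply: eq_bigr => i _.
  by rewrite coef_poly (leq_ltn_trans (leq_ord i) jN).
have take_Anum_E : take_poly N (Anum k * E) = 1.
  by rewrite mulrC -(take_ehrhart_series _ k.-1 _ k_gt0 N_gt0) prednK.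
have -> : C = take_poly N (C * (Anum k * E)).
  by rewrite -take_polyMr take_Anum_E mulr1 take_poly_id // size_poly.
rewrite mulrCA -[RHS]take_polyMl -take_A_Aden take_polyMl.
have -> : A * Aden k * (C * E) = A * E * (C * Aden k) by ring.
by rewrite -[RHS]take_polyMr take_pk_series_Aden // mulr1.
Qed.

Theorem theorem4p4 (k : nat) (a : nat -> int) :
  (1 <= k)%N -> is_Ak_coeffs k a ->
  forall n : nat, (k <= n)%N ->
    (pk k n)%:Z = \sum_(0 <= j < (n - k).+1) a j * (Bkj k j (n - k))%:Z.
Proof.
move=> k_gt0 a_coeffs n le_kn; rewrite -[in LHS](subnK le_kn); move: (n - k)%N => x.
have := congr1 (fun p : {poly int} => p`_x) (@take_Ak_ehrhart k a x.+1 k_gt0 (ltn0Sn x) a_coeffs).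
rewrite /= coef_take_poly coef_poly ltnSn coefM big_mkord => <-.
apply: eq_bigr => j _; have le_jx : (j <= x)%N := leq_ord j.
by rewrite !coef_poly ltn_ord ltnS leq_subr Bkj_ehrhart.
Qed.
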